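(* There is an injective ring homomorphism $\iota:\Lambda_0\to\mathcal C(\mathbb Z_p,A_{\mathfrak p})$ induced by $[u]\mapsto(s\mapsto u^s)$ for $u\in1+\mathfrak pA_{\mathfrak p}$ and extended $A_{\mathfrak p}$-linearly. Moreover, for every dense subset $I\subset\mathbb Z_p$, the set of ideals $\{P_k\}_{k\in I}$ is Zariski dense in $\Lambda_0$ (i.e. $\bigcap_{k\in I}P_k=0$).
   Context: $A=\mathbb F_q[T]$ with $q$ a power of the prime $p$, $\varpi$ monic irreducible, $\mathfrak p=(\varpi)$, $A_{\mathfrak p}$ the completion. $\Lambda_0=A_{\mathfrak p}\llbracket1+\mathfrak pA_{\mathfrak p}\rrbracket=\varprojlim_mA_{\mathfrak p}/\mathfrak p^m[(1+\mathfrak p)/(1+\mathfrak p^m)]$ is the Iwasawa algebra of the pro-$p$ group $1+\mathfrak pA_{\mathfrak p}$ (a $\mathbb Z_p$-module, so $u^s$ makes sense for $s\in\mathbb Z_p$). $\mathcal C(\mathbb Z_p,A_{\mathfrak p})$ is the ring of continuous functions $\mathbb Z_p\to A_{\mathfrak p}$. For $k\in\mathbb Z_p$, $P_k=\ker(f_k)$ where $f_k:\Lambda_0\to A_{\mathfrak p}$ is the continuous $A_{\mathfrak p}$-algebra map with $[u]\mapsto u^k$. *)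

(* Concrete model of A_p = F_q[T]_(w) (completion), Z_p,
   the Iwasawa algebra Lambda_0 = lim_m A_p/p^m[(1+p)/(1+p^m)],
   continuous functions Z_p -> A_p, the map iotaL and the maps f_k. *)
From HB Require Import structures.
From mathcomp Require Import all_boot all_order all_algebra.
Set Implicit Arguments. Unset Strict Implicit. Unset Printing Implicit Defensive.
Import Order.TTheory GRing.Theory Num.Theory.
Local Open Scope ring_scope.

Section Iwasawa.
Variables (F : finFieldType) (w : {poly F}).

(* Level m of every inverse system is "modulo w^(m+1)". *)
Definition modl (m : nat) : {poly F} := w ^+ m.+1.
Definition dg : nat := (size w).-1.

(* Residues modulo w^(m+1), encoded by their coefficient vectors
   (a finite type, used to index the group ring at level m). *)
Definition Res (m : nat) := {ffun 'I_(dg * m.+1) -> F}.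
Definition toP m (r : Res m) : {poly F} := \sum_(i < dg * m.+1) r i *: 'X^i.
Definition ofP m (a : {poly F}) : Res m := [ffun i : 'I_(dg * m.+1) => (a %% modl m)`_i].
Definition punit m (r : Res m) : bool := w %| (toP r - 1).

Definition Ap := nat -> {poly F}.
Definition isAp (x : Ap) : Prop :=
  forall m, x m %% modl m = x m /\ x m.+1 %% modl m = x m.
Definition Ap_zero : Ap := fun _ => 0.
Definition Ap_add (x y : Ap) : Ap := fun m => x m + y m.
Definition Ap_mul (x y : Ap) : Ap := fun m => (x m * y m) %% modl m.
Definition Ap_one : Ap := fun m => 1 %% modl m.
Definition principal (u : Ap) : Prop := isAp u /\ w %| (u 0%N - 1).

(* At level m, an element of (A/w^(m+1))[(1+p)/(1+p^(m+1))] is a function on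
   residues, supported on principal-unit residues, with reduced values. *)
Definition Lam := forall m : nat, {ffun Res m -> {poly F}}.
Definition isLam (l : Lam) : Prop :=
  [/\ forall m r, l m r %% modl m = l m r,
      forall m r, ~~ punit r -> l m r = 0
    & forall m (g : Res m),
        l m g = (\sum_(h : Res m.+1 | ofP m (toP h) == g) l m.+1 h) %% modl m].

Definition Lam_zero : Lam := fun m => [ffun _ => 0].
Definition Lam_add (l1 l2 : Lam) : Lam := fun m => [ffun r => l1 m r + l2 m r].
Definition Lam_one : Lam :=
  fun m => [ffun r => if r == ofP m 1 then 1 %% modl m else 0].
Definition Lam_mul (l1 l2 : Lam) : Lam :=
  fun m => [ffun r =>
    (\sum_(g : Res m | punit g)
       \sum_(h : Res m | punit h && (ofP m (toP g * toP h) == r))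
          l1 m g * l2 m h) %% modl m].
Definition Lam_scale (a : Ap) (l : Lam) : Lam :=
  fun m => [ffun r => (a m * l m r) %% modl m].
Definition dirac (u : Ap) : Lam :=
  fun m => [ffun r => if r == ofP m (u m) then 1 %% modl m else 0].

Section Zp.
Variable p : nat.
(* s m = s mod p^(m+1) *)
Definition isZp (s : nat -> nat) : Prop :=
  forall m, (s m < p ^ m.+1)%N /\ (s m.+1 %% p ^ m.+1)%N = s m.
Definition Zp_dense (I : (nat -> nat) -> Prop) : Prop :=
  forall s, isZp s -> forall n, exists t, [/\ I t, isZp t & t n = s n].
Definition continuousZA (f : (nat -> nat) -> Ap) : Prop :=
  forall s, isZp s -> forall m, exists n,
    forall t, isZp t -> t n = s n -> f t m = f s m.
End Zp.

Definition upow (u : Ap) (s : nat -> nat) : Ap :=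
  fun m => (u m ^+ s m) %% modl m.

Definition iotaL (l : Lam) : (nat -> nat) -> Ap :=
  fun s m => (\sum_(g : Res m | punit g) l m g * toP g ^+ s m) %% modl m.
(* f_k : Lambda_0 -> A_p, [u] |-> u^k, extended A_p-linearly and continuously *)
Definition fk (k : nat -> nat) (l : Lam) : Ap :=
  fun m => (\sum_(g : Res m | punit g) l m g * toP g ^+ k m) %% modl m.
Definition inP (k : nat -> nat) (l : Lam) : Prop :=
  isLam l /\ forall m, fk k l m = 0.

End Iwasawa.

From mathcomp Require Import all_boot all_order all_algebra.
From mathcomp Require Import ring.
Import GRing.Theory.
Local Open Scope ring_scope.
Set Implicit Arguments. Unset Strict Implicit. Unset Printing Implicit Defensive.

(* The element of Lambda_0 is seen level by level: at level m it is an
   A/w^(m+1)-valued function on the residues = 1 mod w, and consecutive levels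
   are related by pushforward along reduction. The ring and module structure
   and the properties of [iotaL] are then finite computations at each level;
   [iotaL l s] is compatible across levels because in characteristic p,
   u^(p^(m+1)) = 1 mod w^(m+1) whenever u = 1 mod w.
   For injectivity, iota(l) = 0 at the integers s < p^(M+1) says that l, at
   level M, annihilates every polynomial of degree < p^(M+1) evaluated at the
   group elements. Since units have a uniform exponent modulo w^c, the indicator
   of r + w^(m+1)A on r + wA is, up to a factor w^n, congruent modulo w^(n+m+1)
   to such a polynomial; pairing it with l gives l_m(r) = 0 mod w^(m+1).
   Finally f_k l and iota(l)(s) agree at level m as soon as k = s mod p^(m+1),
   so for dense I the intersection of the P_k reduces to injectivity. *)

Section PolyCongruence.
Variables (R : fieldType) (d : {poly R}).
Implicit Types a b : {poly R}.

Lemma modp_sum (I : finType) (P : pred I) (f : I -> {poly R}) :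
  (\sum_(i | P i) f i) %% d = \sum_(i | P i) (f i %% d).
Proof. by apply: (big_morph (fun x => x %% d)) => [x y|]; rewrite ?modpD ?mod0p. Qed.

Lemma eq_modp_sum (I : finType) (P : pred I) (f g : I -> {poly R}) :
  (forall i, P i -> f i %% d = g i %% d) ->
  (\sum_(i | P i) f i) %% d = (\sum_(i | P i) g i) %% d.
Proof. by move=> fg; rewrite !modp_sum; apply: eq_bigr. Qed.

Lemma modp_mulml a b : ((a %% d) * b) %% d = (a * b) %% d.
Proof. by rewrite mulrC modp_mul mulrC. Qed.

Lemma eq_modp_mul a a' b b' : a %% d = a' %% d -> b %% d = b' %% d ->
  (a * b) %% d = (a' * b') %% d.
Proof. by move=> aa' bb'; rewrite -modp_mulml aa' modp_mulml -modp_mul bb' modp_mul. Qed.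

Lemma modpXm a k : ((a %% d) ^+ k) %% d = a ^+ k %% d.
Proof.
elim: k => [|k IHk]; first by rewrite !expr0.
by rewrite !exprS; apply: eq_modp_mul => //; rewrite modp_id.
Qed.

Lemma eq_modp_exp a b k : a %% d = b %% d -> a ^+ k %% d = b ^+ k %% d.
Proof. by move=> ab; rewrite -modpXm ab modpXm. Qed.

Lemma eq_modpP a b : a %% d = b %% d <-> d %| a - b.
Proof.
split=> [ab|/modp_eq0P]; first by apply/modp_eq0P; rewrite modpD modpN ab subrr.
by rewrite modpD modpN => /eqP; rewrite subr_eq0 => /eqP.
Qed.

Lemma modp_dvdm e a : e %| d -> (a %% d) %% e = a %% e.
Proof.
by case/dvdpP=> q ->; rewrite {2}(divp_eq a (q * e)) modpD mulrA modp_mull add0r.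
Qed.

Lemma dvdp_sum (I : finType) (P : pred I) (f : I -> {poly R}) :
  (forall i, P i -> d %| f i) -> d %| \sum_(i | P i) f i.
Proof. by move=> df; apply: (big_ind (fun x => d %| x)) => //; apply: dvdp_add. Qed.

End PolyCongruence.

Section SumDelta.
Variables (R : pzSemiRingType) (I : finType).

Lemma sum_if_eq (P : pred I) (i0 : I) (f : I -> R) :
  \sum_(i | P i) (if i == i0 then f i else 0) = if P i0 then f i0 else 0.
Proof.
rewrite -big_mkcondr /=; case: ifP => Pi0.
  by rewrite (big_pred1 i0) // => i /=; case: eqP => [->|]; rewrite ?Pi0 ?andbF.
by rewrite big_pred0 // => i; case: eqP => [->|]; rewrite ?Pi0 ?andbF.
Qed.

Lemma sum_mul_natr_eq (i0 : I) (f : I -> R) : \sum_i f i * (i == i0)%:R = f i0.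
Proof.
rewrite (eq_bigr (fun i => if i == i0 then f i else 0)) ?sum_if_eq // => i _.
by case: eqP; rewrite ?mulr1 ?mulr0.
Qed.

End SumDelta.

Section IwasawaModel.
Variables (F : finFieldType) (w : {poly F}).
Hypothesis w_irr : irreducible_poly w.
Implicit Types a b : {poly F}.

Lemma w_neq0 : w != 0. Proof. exact: irredp_neq0. Qed.

Lemma modl_dvdp m n : (m <= n)%N -> modl w m %| modl w n.
Proof. by move=> mn; rewrite dvdp_exp2l. Qed.

Lemma w_dvdp_modl m : w %| modl w m.
Proof. exact: (modl_dvdp (leq0n m)). Qed.

Lemma size_modl m : size (modl w m) = (dg w * m.+1).+1.
Proof.
by rewrite /dg -size_exp prednK // size_poly_gt0 expf_neq0 // w_neq0.
Qed.

Lemma size_toP m (r : Res w m) : (size (toP r) <= dg w * m.+1)%N.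
Proof.
apply: (leq_trans (size_sum _ _ _)); apply/bigmax_leqP => i _.
by apply: (leq_trans (size_scale_leq _ _)); rewrite size_polyXn.
Qed.

Lemma toP_mod m (r : Res w m) : toP r %% modl w m = toP r.
Proof. by rewrite modp_small // size_modl ltnS size_toP. Qed.

Lemma one_mod m : 1 %% modl w m = 1.
Proof.
rewrite modp_small // size_poly1 size_modl ltnS muln_gt0 andbT /dg -subn1 subn_gt0.
by case: w_irr.
Qed.

Lemma toP_ofP m a : toP (ofP w m a) = a %% modl w m.
Proof.
rewrite /toP /ofP; under eq_bigr do rewrite ffunE.
rewrite -poly_def; apply/polyP => i; rewrite coef_poly.
case: ltnP => // le_i; rewrite nth_default // (leq_trans _ le_i) // -ltnS -size_modl.
by rewrite ltn_modp expf_neq0 // w_neq0.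
Qed.

Lemma coef_toP m (r : Res w m) (i : 'I_(dg w * m.+1)) : (toP r)`_i = r i.
Proof.
rewrite /toP coef_sum (bigD1 i) //= coefZ coefXn eqxx mulr1 big1 ?addr0 // => j ji.
by rewrite coefZ coefXn eq_sym (inj_eq val_inj) (negbTE ji) mulr0.
Qed.

Lemma ofP_toP m (r : Res w m) : ofP w m (toP r) = r.
Proof. by apply/ffunP => i; rewrite ffunE toP_mod coef_toP. Qed.

Lemma ofP_eq m a b : (ofP w m a == ofP w m b) = (a %% modl w m == b %% modl w m).
Proof.
apply/eqP/eqP => [ab|ab]; first by rewrite -!toP_ofP ab.
by apply/ffunP => i; rewrite !ffunE ab.
Qed.

Lemma ofP_eq_dvdp m a (r : Res w m) : (ofP w m a == r) = (modl w m %| a - toP r).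
Proof. by rewrite -{1}(ofP_toP r) ofP_eq; apply/eqP/idP => /eq_modpP. Qed.

Lemma ofP_mod_le m n a : (m <= n)%N -> ofP w m (a %% modl w n) = ofP w m a.
Proof. by move=> mn; apply/eqP; rewrite ofP_eq modp_dvdm ?modl_dvdp. Qed.

Lemma ofP_toP_le m n a : (m <= n)%N -> ofP w m (toP (ofP w n a)) = ofP w m a.
Proof. by move=> mn; rewrite toP_ofP ofP_mod_le. Qed.

Lemma ofP_mulmodl m a b : ofP w m ((a %% modl w m) * b) = ofP w m (a * b).
Proof. by apply/eqP; rewrite ofP_eq modp_mulml. Qed.

Lemma ofP_mulmodr m a b : ofP w m (a * (b %% modl w m)) = ofP w m (a * b).
Proof. by apply/eqP; rewrite ofP_eq modp_mul. Qed.

Lemma punit_ofP m a : punit (ofP w m a) = (w %| a - 1).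
Proof.
have /eq_modpP a_mod_w := modp_dvdm a (w_dvdp_modl m).
by rewrite /punit toP_ofP -[RHS](dvdp_addr _ a_mod_w) addrA addrNK.
Qed.

Lemma punit_mul m (g h : Res w m) :
  punit g -> punit h -> punit (ofP w m (toP g * toP h)).
Proof.
rewrite punit_ofP /punit => pg ph.
have -> : toP g * toP h - 1 = (toP g - 1) * toP h + (toP h - 1) by ring.
by rewrite dvdp_add // dvdp_mulr.
Qed.

Implicit Types l : Lam w.

Lemma isLam_mod l m (r : Res w m) : isLam l -> l m r %% modl w m = l m r.
Proof. by case=> + _ _; apply. Qed.

Lemma isLam_supp l m (r : Res w m) : isLam l -> ~~ punit r -> l m r = 0.
Proof. by case=> _ + _; apply. Qed.

Lemma sum_punit l m (G : Res w m -> {poly F}) : isLam l ->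
  \sum_(g | punit g) l m g * G g = \sum_g l m g * G g.
Proof.
move=> L; rewrite big_mkcond; apply: eq_bigr => g _.
by case: ifP => // /negbT /(isLam_supp L) ->; rewrite mul0r.
Qed.

Lemma sum_pushforward l m (G : Res w m -> {poly F}) (G' : Res w m.+1 -> {poly F}) :
  isLam l ->
  (forall h, punit h -> G' h %% modl w m = G (ofP w m (toP h)) %% modl w m) ->
  (\sum_h l m.+1 h * G' h) %% modl w m = (\sum_g l m g * G g) %% modl w m.
Proof.
move=> L GG'; have [_ _ compat] := L.
rewrite (eq_modp_sum (g := fun h => l m.+1 h * G (ofP w m (toP h)))); last first.
  move=> h _; case: (boolP (punit h)) => ph; first exact: eq_modp_mul (GG' h ph).
  by rewrite (isLam_supp L ph) !mul0r.
rewrite (partition_big (fun h => ofP w m (toP h)) predT) //=.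
apply: eq_modp_sum => g _.
rewrite (eq_bigr (fun h => l m.+1 h * G g)) => [|h /eqP <-] //.
by rewrite -big_distrl /= compat modp_mulml.
Qed.

Lemma sum_pushforward_le l m n (G : Res w m -> {poly F}) : isLam l -> (m <= n)%N ->
  (\sum_(h : Res w n) l n h * G (ofP w m (toP h))) %% modl w m =
  (\sum_g l m g * G g) %% modl w m.
Proof.
move=> L /subnK <-; elim: (n - m)%N => [|k IHk].
  by congr (_ %% _); apply: eq_bigr => h _; rewrite ofP_toP.
have mod_km := modp_dvdm _ (modl_dvdp (leq_addl k m)).
rewrite -IHk addSn -mod_km -[RHS]mod_km; congr (_ %% _).
by apply: sum_pushforward => // h _; rewrite ofP_toP_le ?leq_addl.
Qed.

Lemma compat_of_sum_pushforward l m :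
  (forall r, l m r %% modl w m = l m r) ->
  (forall G : Res w m -> {poly F},
     (\sum_h l m.+1 h * G (ofP w m (toP h))) %% modl w m =
     (\sum_g l m g * G g) %% modl w m) ->
  forall g, l m g = (\sum_(h | ofP w m (toP h) == g) l m.+1 h) %% modl w m.
Proof.
move=> lmod compat g; have := compat (fun r => (r == g)%:R).
rewrite sum_mul_natr_eq lmod => <-; congr (_ %% _).
by rewrite [RHS]big_mkcond; apply: eq_bigr => h _; case: eqP; rewrite ?mulr1 ?mulr0.
Qed.

Lemma isAp_mod_le (u : Ap F) m n : isAp w u -> (m <= n)%N -> u n %% modl w m = u m.
Proof.
move=> uAp /subnK <-; elim: (n - m)%N => [|k IHk]; first by case: (uAp m).
have mod_km := modp_dvdm (u (k.+1 + m)%N) (modl_dvdp (leq_addl k m)).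
by rewrite addSn -mod_km (proj2 (uAp _)).
Qed.

Lemma principal_dvdp (u : Ap F) m : principal w u -> w %| u m - 1.
Proof.
case=> uAp u01; have /eq_modpP um0 : u m %% modl w 0 = u 0 %% modl w 0.
  by rewrite (isAp_mod_le uAp (leq0n m)) (proj1 (uAp 0)).
by rewrite -(subrK (u 0) (u m)) -addrA dvdp_add.
Qed.

Lemma isLam_dirac (u : Ap F) : principal w u -> isLam (dirac w u).
Proof.
move=> pu; have [uAp _] := pu.
split=> [m r|m r|m g]; rewrite /dirac ?ffunE.
- by case: ifP; rewrite ?modp_id ?mod0p.
- by case: eqP => // ->; rewrite punit_ofP principal_dvdp.
under eq_bigr do rewrite ffunE.
rewrite sum_if_eq ofP_toP_le // -(ofP_mod_le (u m.+1) (leqnn m)) (proj2 (uAp m)) eq_sym.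
by case: ifP; rewrite ?mod0p ?modp_dvdm ?modl_dvdp.
Qed.

Lemma principal1 : principal w (fun _ => 1).
Proof. by split=> [m|]; rewrite ?one_mod // subrr dvdp0. Qed.

Lemma isLam_one : isLam (Lam_one w).
Proof. exact: isLam_dirac principal1. Qed.

Lemma isLam_zero : isLam (Lam_zero w).
Proof.
split=> [m r|m r _|m g]; rewrite ?ffunE ?mod0p //.
by rewrite big1 ?mod0p // => h _; rewrite ffunE.
Qed.

Lemma isLam_add l1 l2 : isLam l1 -> isLam l2 -> isLam (Lam_add l1 l2).
Proof.
case=> mod1 supp1 compat1 [mod2 supp2 compat2].
split=> [m r|m r pr|m g]; rewrite ?ffunE.
- by rewrite modpD mod1 mod2.
- by rewrite supp1 ?supp2 ?addr0.
under eq_bigr do rewrite ffunE.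
by rewrite big_split /= modpD -compat1 -compat2.
Qed.

Lemma isLam_scale (a : Ap F) l : isAp w a -> isLam l -> isLam (Lam_scale a l).
Proof.
move=> aAp [lmod supp compat].
split=> [m r|m r pr|m g]; rewrite ?ffunE.
- by rewrite modp_id.
- by rewrite supp ?mulr0 ?mod0p.
under eq_bigr do rewrite ffunE.
rewrite compat modp_mul (eq_modp_sum (g := fun h => a m.+1 * l m.+1 h)); last first.
  by move=> h _; rewrite modp_dvdm ?modl_dvdp.
rewrite -big_distrr /=; apply: eq_modp_mul => //.
by rewrite (isAp_mod_le aAp (leqnSn m)) (proj1 (aAp m)).
Qed.

Lemma Lam_mulE l1 l2 m r : isLam l1 -> isLam l2 ->
  Lam_mul l1 l2 m r = (\sum_g \sum_h
     l1 m g * l2 m h * (r == ofP w m (toP g * toP h))%:R) %% modl w m.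
Proof.
move=> L1 L2; rewrite ffunE; congr (_ %% _).
rewrite big_mkcond; apply: eq_bigr => g _; case: ifP => pg; last first.
  by rewrite big1 // => h _; rewrite (isLam_supp L1) ?pg // !mul0r.
rewrite big_mkcond; apply: eq_bigr => h _ /=.
case: (boolP (punit h)) => ph /=; last by rewrite (isLam_supp L2 ph) mulr0 mul0r.
by rewrite eq_sym; case: eqP; rewrite ?mulr1 ?mulr0.
Qed.

Lemma Lam_mul_sum l1 l2 m (G : Res w m -> {poly F}) : isLam l1 -> isLam l2 ->
  (\sum_r Lam_mul l1 l2 m r * G r) %% modl w m =
  (\sum_g l1 m g * \sum_h l2 m h * G (ofP w m (toP g * toP h))) %% modl w m.
Proof.
move=> L1 L2; rewrite (eq_modp_sum (g := fun r => (\sum_g \sum_h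
    l1 m g * l2 m h * (r == ofP w m (toP g * toP h))%:R) * G r)); last first.
  by move=> r _; rewrite Lam_mulE // modp_mulml.
congr (_ %% _); under eq_bigr do rewrite big_distrl /=.
rewrite exchange_big; apply: eq_bigr => g _ /=.
under eq_bigr do rewrite big_distrl /=.
rewrite exchange_big big_distrr; apply: eq_bigr => h _ /=.
under eq_bigr do rewrite -mulrA [_%:R * _]mulrC.
by rewrite -big_distrr /= sum_mul_natr_eq mulrA.
Qed.

Lemma isLam_mul l1 l2 : isLam l1 -> isLam l2 -> isLam (Lam_mul l1 l2).
Proof.
move=> L1 L2; split=> [m r|m r pr|m].
- by rewrite ffunE modp_id.
- rewrite ffunE big1 ?mod0p // => g pg; rewrite big1 // => h /andP[ph /eqP gh].
  by move: pr; rewrite -gh punit_mul.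
apply: compat_of_sum_pushforward => [r|G]; first by rewrite ffunE modp_id.
rewrite -(modp_dvdm _ (modl_dvdp (leqnSn m))) !Lam_mul_sum // modp_dvdm ?modl_dvdp //.
apply: sum_pushforward => // g _; apply: sum_pushforward => // h _; congr (G _ %% _).
by rewrite !toP_ofP ofP_mod_le // ofP_mulmodl ofP_mulmodr.
Qed.

Variable p : nat.
Hypothesis p_char : p \in [pchar F].

Lemma p_gt1 : (1 < p)%N.
Proof. exact/prime_gt1/(pcharf_prime p_char). Qed.

Lemma subr1_exp_pchar (u : {poly F}) k : (u - 1) ^+ (p ^ k) = u ^+ (p ^ k) - 1.
Proof.
have p_charP : p \in [pchar {poly F}] by rewrite pchar_poly.
have pk_nat : [pchar {poly F}].-nat (p ^ k)%N.
  by rewrite pnatX (pnatE _ (pcharf_prime p_charP)) p_charP.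
by rewrite exprDn_pchar // exprNn_pchar // expr1n.
Qed.

Lemma exp_mod_period (u : {poly F}) m j (i : nat) : w %| u - 1 ->
  u ^+ (j * p ^ m.+1 + i) %% modl w m = u ^+ i %% modl w m.
Proof.
move=> u1; have up1 : u ^+ (p ^ m.+1) %% modl w m = 1 %% modl w m.
  apply/eq_modpP; rewrite -subr1_exp_pchar; apply: dvdp_trans (dvdp_exp2r _ u1).
  by rewrite dvdp_exp2l // ltnW // ltn_expl // p_gt1.
rewrite exprD mulnC exprM; transitivity ((1 * u ^+ i) %% modl w m); last by rewrite mul1r.
by apply: eq_modp_mul => //; rewrite (eq_modp_exp _ up1) expr1n.
Qed.

Lemma iotaLE l s m : isLam l ->
  iotaL l s m = (\sum_g l m g * toP g ^+ s m) %% modl w m.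
Proof. by move=> L; rewrite /iotaL sum_punit. Qed.

Lemma iota_isAp l s : isLam l -> isZp p s -> isAp w (iotaL l s).
Proof.
move=> L sZp m; split; first by rewrite /iotaL modp_id.
rewrite !iotaLE // modp_dvdm ?modl_dvdp //; apply: sum_pushforward => // h ph.
rewrite toP_ofP modpXm; case: (sZp m) => _ <-.
by rewrite {1}(divn_eq (s m.+1) (p ^ m.+1)) (exp_mod_period _ _ _ ph).
Qed.

Lemma iota_continuous l : continuousZA p (iotaL l).
Proof. by move=> s _ m; exists m => t _ ts; rewrite /iotaL ts. Qed.

Lemma iota_dirac (u : Ap F) s m : principal w u ->
  iotaL (dirac w u) s m = upow w u s m.
Proof.
move=> pu; rewrite /iotaL (eq_bigr (fun g => if g == ofP w m (u m) then toP g ^+ s m else 0)).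
  by rewrite sum_if_eq punit_ofP principal_dvdp // toP_ofP modpXm.
by move=> g _; rewrite ffunE; case: ifP; rewrite ?one_mod ?mul1r ?mul0r.
Qed.

Lemma iota_one s m : iotaL (Lam_one w) s m = Ap_one w m.
Proof. by rewrite (iota_dirac _ _ principal1) /upow expr1n. Qed.

Lemma iota_add l1 l2 s m :
  iotaL (Lam_add l1 l2) s m = Ap_add (iotaL l1 s) (iotaL l2 s) m.
Proof.
rewrite /iotaL /Ap_add -modpD -big_split /=; congr (_ %% _).
by apply: eq_bigr => g _; rewrite ffunE mulrDl.
Qed.

Lemma iota_scale (a : Ap F) l s m :
  iotaL (Lam_scale a l) s m = Ap_mul w a (iotaL l s) m.
Proof.
rewrite /iotaL /Ap_mul modp_mul big_distrr /=.
by apply: eq_modp_sum => g _; rewrite ffunE modp_mulml mulrA.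
Qed.

Lemma iota_mul l1 l2 s m : isLam l1 -> isLam l2 ->
  iotaL (Lam_mul l1 l2) s m = Ap_mul w (iotaL l1 s) (iotaL l2 s) m.
Proof.
move=> L1 L2; have L12 := isLam_mul L1 L2.
rewrite /Ap_mul !iotaLE // Lam_mul_sum // modp_mul modp_mulml.
rewrite big_distrl; apply: eq_modp_sum => g _ /=.
rewrite -mulrA; apply: eq_modp_mul => //; rewrite big_distrr /=.
apply: eq_modp_sum => h _; rewrite mulrCA; apply: eq_modp_mul => //.
by rewrite toP_ofP modpXm exprMn.
Qed.

Lemma unit_order_le_card c y : ~~ (w %| y) ->
  exists2 a, (0 < a <= #|{: Res w c}|)%N & modl w c %| y ^+ a - 1.
Proof.
move=> wNy; set K := #|{: Res w c}|.
have [i [j [ij yij]]] : exists i j : 'I_K.+1,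
    (i < j)%N /\ ofP w c (y ^+ i) = ofP w c (y ^+ j).
  have /injectivePn [i [j ij yij]] : ~~ injectiveb (fun i : 'I_K.+1 => ofP w c (y ^+ i)).
    by apply/injectiveP => /leq_card; rewrite card_ord ltnn.
  case: (ltngtP i j) => [lt|lt|/val_inj eq]; first by exists i, j.
    by exists j, i.
  by rewrite eq eqxx in ij.
exists (j - i)%N; first by rewrite subn_gt0 ij (leq_trans (leq_subr _ _)) // -ltnS.
move/eqP: yij; rewrite ofP_eq => /eqP /esym /eq_modpP.
have -> : y ^+ j - y ^+ i = y ^+ i * (y ^+ (j - i) - 1).
  by rewrite mulrBr mulr1 -exprD subnKC // ltnW.
by rewrite Gauss_dvdpr // coprimep_expl // coprimep_expr // irreducible_poly_coprime.
Qed.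

Lemma uniform_unit_exponent c : exists2 E, (c <= E)%N &
  forall y, ~~ (w %| y) -> w ^+ c %| y ^+ E - 1.
Proof.
exists (#|{: Res w c}|`! * c.+1)%N.
  exact: leq_trans (leqnSn c) (leq_pmull _ (fact_gt0 _)).
move=> y wNy; have [a a_bound ya1] := unit_order_le_card c wNy.
apply: dvdp_trans (dvdp_exp2l w (leqnSn c)) _.
have /dvdnP [k ->] := dvdn_fact a_bound.
rewrite mulnAC mulnC exprM; apply/(eq_modpP (modl w c)).
by rewrite (eq_modp_exp _ (iffRL (eq_modpP _ _ _) ya1)) expr1n.
Qed.

Lemma indicator_approx j c : exists n (P : {poly {poly F}}), forall z, w %| z ->
  w ^+ (n + c) %| P.[z] - w ^+ n * (dvdp (w ^+ j.+1) z)%:R.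
Proof.
elim: j c => [|j IHj] c.
  exists 0%N, 1 => z wz; rewrite -polyC1 hornerC expr1 wz mulr1 expr0 subrr.
  exact: dvdp0.
(* For z = w^(j+1) y, w^((j+1)E) - z^E = w^((j+1)E) (1 - y^E), and 1 - y^E is
   [w %| y] modulo w^c: a unit y has y^E = 1 mod w^c. *)
have [E cE unitE] := uniform_unit_exponent c.
have [n [P approxP]] := IHj (j.+1 * E + c)%N.
exists (n + j.+1 * E)%N, (P * ((w ^+ (j.+1 * E))%:P - 'X^E)) => z wz.
rewrite hornerM hornerD hornerN hornerC hornerXn -addnA.
rewrite (exprD w n) (exprD w (j.+1 * E)) (exprD w n (j.+1 * E)).
have [a Pz] := dvdpP _ _ (approxP z wz).
have {}Pz : P.[z] = w ^+ n * (dvdp (w ^+ j.+1) z)%:R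
                    + a * (w ^+ n * (w ^+ (j.+1 * E) * w ^+ c)).
  by rewrite -!exprD -Pz addrC subrK.
case: (boolP (w ^+ j.+1 %| z)) => [wjz|wNjz]; last first.
  have -> : (w ^+ j.+2 %| z) = false.
    by apply: contraNF wNjz; apply: dvdp_trans; rewrite dvdp_exp2l.
  rewrite (negbTE wNjz) mulr0n mulr0 add0r in Pz; rewrite Pz mulr0n mulr0 subr0.
  by apply/dvdpP; exists (a * (w ^+ (j.+1 * E) - z ^+ E)); ring.
rewrite wjz mulr1n mulr1 in Pz; rewrite Pz; have [y zE] := dvdpP _ _ wjz; rewrite zE.
have -> : (w ^+ j.+2 %| y * w ^+ j.+1) = (w %| y).
  by rewrite exprS dvdp_mul2r // expf_neq0 // w_neq0.
have [b yE] : exists b, 1 - y ^+ E - (dvdp w y)%:R = b * w ^+ c.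
  apply/dvdpP; case: (boolP (w %| y)) => wy /=.
    rewrite addrAC subrr add0r dvdpNr.
    exact: dvdp_trans (dvdp_exp2l w cE) (dvdp_exp2r E wy).
  by rewrite subr0 -opprB dvdpNr unitE.
have {}yE : y ^+ E = 1 - (dvdp w y)%:R - b * w ^+ c by rewrite -yE; ring.
apply/dvdpP; exists (b + a * w ^+ (j.+1 * E) * ((dvdp w y)%:R + b * w ^+ c)).
by rewrite exprMn yE -exprM mulnC; ring.
Qed.

Lemma iota_eq0_horner l M (Q : {poly {poly F}}) : isLam l ->
  (forall s, isZp p s -> forall m, iotaL l s m = 0) -> (size Q <= p ^ M.+1)%N ->
  modl w M %| \sum_h l M h * Q.[toP h].
Proof.
move=> L iota0 sizeQ; under eq_bigr do rewrite horner_coef big_distrr /=.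
rewrite exchange_big /=; apply: dvdp_sum => i _.
under eq_bigr do rewrite mulrCA; rewrite -big_distrr /=; apply: dvdp_mull.
have iZp : isZp p (fun t => (i %% p ^ t.+1)%N).
  move=> t; rewrite ltn_pmod ?expn_gt0 ?(ltnW p_gt1) //.
  by rewrite modn_dvdm // dvdn_exp2l.
have := iota0 _ iZp M; rewrite iotaLE // modn_small ?(leq_trans (ltn_ord i) sizeQ) //.
by move/modp_eq0P.
Qed.

Lemma iota_injective l : isLam l ->
  (forall s, isZp p s -> forall m, iotaL l s m = 0) -> forall m r, l m r = 0.
Proof.
move=> L iota0 m r; case: (boolP (punit r)) => pr; last exact: isLam_supp L pr.
have [n [P approxP]] := indicator_approx m m.+1.
pose Q := P \Po ('X - (toP r)%:P); pose M := maxn (n + m) (size Q).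
have nmM : (n + m <= M)%N := leq_maxl _ _.
have sizeQ : (size Q <= p ^ M.+1)%N.
  exact: leq_trans (leq_maxr _ _) (ltnW (ltn_trans (ltnSn M) (ltn_expl _ p_gt1))).
pose X := \sum_h l M h * (ofP w m (toP h) == r)%:R.
have sumQ : w ^+ (n + m.+1) %| \sum_h l M h * Q.[toP h].
  by apply: dvdp_trans (iota_eq0_horner L iota0 sizeQ); rewrite dvdp_exp2l // addnS.
have approxX : w ^+ (n + m.+1) %| \sum_h l M h * Q.[toP h] - w ^+ n * X.
  rewrite /X big_distrr /= -sumrB; apply: dvdp_sum => h _.
  case: (boolP (punit h)) => ph; last by rewrite (isLam_supp L ph) !mul0r mulr0 subrr dvdp0.
  rewrite [w ^+ n * _]mulrCA -mulrBr dvdp_mull // horner_comp hornerXsubC ofP_eq_dvdp.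
  apply: approxP; have -> : toP h - toP r = (toP h - 1) - (toP r - 1) by ring.
  exact: dvdp_sub.
have wnX : w ^+ (n + m.+1) %| w ^+ n * X by rewrite -(dvdp_subr _ sumQ).
have modlX : modl w m %| X by rewrite exprD dvdp_mul2l ?expf_neq0 ?w_neq0 in wnX.
have := sum_pushforward_le (fun g => (g == r)%:R) L (leq_trans (leq_addl n m) nmM).
by rewrite sum_mul_natr_eq (isLam_mod r L) => <-; apply/modp_eq0P.
Qed.

Lemma inter_Pk_eq0 (I : (nat -> nat) -> Prop) : Zp_dense p I ->
  forall l, (forall k, I k -> inP k l) -> forall m r, l m r = 0.
Proof.
move=> Idense l lP; have zeroZp : isZp p (fun _ => 0%N).
  by move=> t; rewrite expn_gt0 (ltnW p_gt1) mod0n.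
have [t [It _ _]] := Idense _ zeroZp 0%N.
apply: iota_injective => [|s sZp m]; first exact: (lP t It).1.
have [k [Ik _ ks]] := Idense s sZp m.
by rewrite -((lP k Ik).2 m) /fk /iotaL ks.
Qed.

End IwasawaModel.

Theorem mainTheorem9 (F : finFieldType) (p : nat) (w : {poly F})
    (Hp : p \in [pchar F]) (Hmonic : w \is monic) (Hirr : irreducible_poly w) :
  (* Lambda_0 is closed under its ring / A_p-module operations *)
  (isLam (Lam_zero w) /\ isLam (Lam_one w)) /\
  [/\ (forall l1 l2 : Lam w, isLam l1 -> isLam l2 -> isLam (Lam_add l1 l2)),
      (forall l1 l2 : Lam w, isLam l1 -> isLam l2 -> isLam (Lam_mul l1 l2)),
      (forall (a : Ap F) (l : Lam w), isAp w a -> isLam l -> isLam (Lam_scale a l))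
    & (forall u : Ap F, principal w u -> isLam (dirac w u))] /\
  (* iotaL lands in C(Z_p, A_p) *)
  (forall l : Lam w, isLam l ->
     (forall s, isZp p s -> isAp w (iotaL l s)) /\ continuousZA p (iotaL l)) /\
  (* iotaL is a ring homomorphism, A_p-linear, with [u] |-> (s |-> u^s) *)
  [/\ (forall s, isZp p s -> forall m, iotaL (Lam_one w) s m = Ap_one w m),
      (forall l1 l2 : Lam w, isLam l1 -> isLam l2 -> forall s, isZp p s -> forall m,
         iotaL (Lam_add l1 l2) s m = Ap_add (iotaL l1 s) (iotaL l2 s) m),
      (forall l1 l2 : Lam w, isLam l1 -> isLam l2 -> forall s, isZp p s -> forall m,
         iotaL (Lam_mul l1 l2) s m = Ap_mul w (iotaL l1 s) (iotaL l2 s) m),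
      (forall (a : Ap F) (l : Lam w), isAp w a -> isLam l -> forall s, isZp p s ->
         forall m, iotaL (Lam_scale a l) s m = Ap_mul w a (iotaL l s) m)
    & (forall u : Ap F, principal w u -> forall s, isZp p s -> forall m,
         iotaL (dirac w u) s m = upow w u s m)] /\
  (* iotaL is injective *)
  (forall l : Lam w, isLam l ->
     (forall s, isZp p s -> forall m, iotaL l s m = 0) ->
     forall m r, l m r = 0) /\
  (* for every dense I in Z_p, the intersection of the P_k (k in I) is 0 *)
  (forall I : (nat -> nat) -> Prop, (forall k, I k -> isZp p k) -> Zp_dense p I ->
     forall l : Lam w, (forall k, I k -> inP k l) -> forall m r, l m r = 0).
Proof.
(* [Hmonic] is unused: reduction modulo w^(m+1) over the field F only needs w != 0. *)
split; first by split; [exact: isLam_zero | exact: isLam_one].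
split.
  by split; [exact: isLam_add | exact: isLam_mul | exact: isLam_scale | exact: isLam_dirac].
split; first by move=> l L; split; [move=> s; exact: iota_isAp | exact: iota_continuous].
split.
  split=> *; [exact: iota_one | exact: iota_add | exact: iota_mul | exact: iota_scale |
              exact: iota_dirac].
split; first exact: iota_injective.
by move=> I _; exact: inter_Pk_eq0.
Qed.
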